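(* Let $h_1,\dots,h_p$ be bilinear forms on $V$. Then $$c(h_1\cdots h_p)=\sum_i(c\,h_i)\,h_1\cdots\hat h_i\cdots h_p-\sum_{i<j}(h_j\circ h_i+h_i\circ h_j)\,h_1\cdots\hat h_i\cdots\hat h_j\cdots h_p,$$ where a hat denotes omission. In particular, for a bilinear form $k$ on $V$, $$c\,k^p=p\,(c\,k)\,k^{p-1}-p(p-1)(k\circ k)\,k^{p-2}.$$
   Context: $(V,g)$ is a Euclidean real vector space of dimension $n$ with orthonormal basis $(e_i)$, identified with $V^*$ via $g$. Double forms: elements of $\bigoplus_{p,q}\Lambda^pV^*\otimes\Lambda^qV^*$, a $(p,q)$ double form viewed as a multilinear form $\omega(x_1,\dots,x_p;y_1,\dots,y_q)$ skew in the $x$'s and in the $y$'s; bilinear forms on $V$ are $(1,1)$ double forms. Exterior product: $(\theta_1\otimes\theta_2)(\theta_3\otimes\theta_4)=(\theta_1\wedge\theta_3)\otimes(\theta_2\wedge\theta_4)$, extended bilinearly ($k^0=1$). Composition product: $(\theta_1\otimes\theta_2)\circ(\theta_3\otimes\theta_4)=\langle\theta_1,\theta_4\rangle\theta_3\otimes\theta_2$, extended bilinearly (for bilinear forms this corresponds to composition of the associated endomorphisms). The contraction $c$ is $c\omega(x_1,\dots,x_{p-1};y_1,\dots,y_{q-1})=\sum_j\omega(e_j,x_1,\dots,x_{p-1};e_j,y_1,\dots,y_{q-1})$ ($c\omega=0$ if $p=0$ or $q=0$); for a bilinear form $h$, $c\,h$ is its trace. *)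

(* V = 'rV[R]_n with the standard (orthonormal) basis. *)
From HB Require Import structures.
From mathcomp Require Import all_boot all_order all_algebra.
Set Implicit Arguments. Unset Strict Implicit. Unset Printing Implicit Defensive.
Import Order.TTheory GRing.Theory Num.Theory.
Local Open Scope ring_scope.

Section DoubleForms.
Variables (R : realFieldType) (n : nat).

Notation V := 'rV[R]_n.

(* A (p,q) double form is represented by the multilinear function
   omega(x_1..x_p ; y_1..y_q); we use functions on sequences of vectors and
   only ever evaluate a (p,q) form on sequences of sizes p and q. *)
Definition dform := seq V -> seq V -> R.

Definition ebasis (j : 'I_n) : V := delta_mx 0 j.

(* the bilinear form h(x,y) = x h y^T attached to a matrix h : h a b = h(e_a,e_b) *)
Definition bform (h : 'M[R]_n) : dform :=
  fun xs ys => (nth 0 xs 0 *m h *m (nth 0 ys 0)^T) 0 0.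

(* composition product of bilinear forms:
   (theta1 (x) theta2) o (theta3 (x) theta4) = <theta1,theta4> theta3 (x) theta2,
   i.e. (h o k)(x,y) = sum_j k(x,e_j) h(e_j,y), whose matrix is k *m h *)
Definition bcomp (h k : 'M[R]_n) : 'M[R]_n := k *m h.

(* sign of the shuffle permutation putting the (sorted) positions of A first:
   (-1)^(number of pairs a in A, b notin A with b < a) *)
Definition shuffle_sign N (A : {set 'I_N}) : R :=
  (-1) ^+ #|[set ab : 'I_N * 'I_N | (ab.1 \in A) && (ab.2 \notin A) && (ab.2 < ab.1)%N]|.

Definition subseq_at (xs : seq V) N (A : {set 'I_N}) : seq V :=
  [seq nth 0 xs (nat_of_ord i) | i <- enum A].

(* exterior product of a (p,q) double form w with a (r,s) double form t,
   i.e. the bilinear extension of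
   (th1 (x) th2)(th3 (x) th4) = (th1 /\ th3) (x) (th2 /\ th4),
   with (a /\ b)(x_1..x_{p+r}) = sum over shuffles sgn * a(..) b(..). *)
Definition dprod (p q : nat) (w t : dform) : dform :=
  fun xs ys =>
    \sum_(A : {set 'I_(size xs)} | #|A| == p)
    \sum_(B : {set 'I_(size ys)} | #|B| == q)
      shuffle_sign A * shuffle_sign B *
      w (subseq_at xs A) (subseq_at ys B) *
      t (subseq_at xs (~: A)) (subseq_at ys (~: B)).

Definition dunit : dform := fun _ _ => 1.

Definition dprods (hs : seq 'M[R]_n) : dform :=
  foldr (fun h w => dprod 1 1 (bform h) w) dunit hs.

Definition dpow (k : 'M[R]_n) (m : nat) : dform := dprods (nseq m k).

Definition dcontr (p q : nat) (w : dform) : dform :=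
  fun xs ys => if (0 < p)%N && (0 < q)%N then
      \sum_(j < n) w (ebasis j :: xs) (ebasis j :: ys) else 0.

Definition deq (p q : nat) (w t : dform) : Prop :=
  forall xs ys : seq V, size xs = p -> size ys = q -> w xs ys = t xs ys.

End DoubleForms.

(* The exterior product of a bilinear form h with a double form w is a cofactor
   expansion, (h w)(x; y) = sum_(a,b) (-1)^(a+b) h(x_a, y_b) w(x \ x_a; y \ y_b).
   Contracting such an expansion gives four terms: (tr h) w, two terms in which
   the contracted basis vector is fed to w instead of h, and h times the
   contraction of w.  When w = h_1 ... h_m, induction on m shows that the two
   middle terms are sum_l h_1 ... (h o h_l) ... h_m and sum_l h_1 ... (h_l o h) ... h_m;
   the inductive step rests on the antisymmetry of a double alternating sum in
   the two deleted entries, which is also why the exterior product of bilinear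
   forms is commutative.  Induction on p then yields the formula, and for
   h_i = k it becomes the second one after counting the p(p-1)/2 pairs i < j. *)

From HB Require Import structures.
From mathcomp Require Import all_boot all_order all_algebra.
From mathcomp Require Import ring zify.
Set Implicit Arguments. Unset Strict Implicit. Unset Printing Implicit Defensive.
Import Order.TTheory GRing.Theory Num.Theory.

Section RemNth.
Variable T : Type.

Definition rem_nth (i : nat) (s : seq T) := take i s ++ drop i.+1 s.

Lemma rem_nth0 x s : rem_nth 0 (x :: s) = s.
Proof. by rewrite /rem_nth /= drop0. Qed.

Lemma rem_nthS i x s : rem_nth i.+1 (x :: s) = x :: rem_nth i s.
Proof. by []. Qed.

Lemma rem_nth_nil i : rem_nth i [::] = [::].
Proof. by case: i. Qed.

Lemma nth_rem_nth x0 i s k : nth x0 (rem_nth i s) k = nth x0 s (bump i k).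
Proof.
elim: s i k => [|x s IHs] [|i] [|k] //=; rewrite ?rem_nth_nil ?nth_nil ?rem_nth0 //.
by rewrite IHs /bump ltnS addnS.
Qed.

Lemma size_rem_nth i s : i < size s -> size (rem_nth i s) = (size s).-1.
Proof.
move=> lt_i_s; rewrite /rem_nth size_cat size_take size_drop lt_i_s.
by move: lt_i_s; case: (size s) => // m le_i_m; rewrite subSS subnKC.
Qed.

Lemma rem_nthC i k s : i <= k -> rem_nth k (rem_nth i s) = rem_nth i (rem_nth k.+1 s).
Proof.
elim: s i k => [|x s IHs] [|i] [|k] //= le_ik; rewrite ?rem_nth_nil //.
- by rewrite !rem_nthS !rem_nth0.
- by rewrite !rem_nthS !rem_nth0.
- by rewrite !rem_nthS IHs.
Qed.

Lemma rem_nth_nseq i m (x : T) : i < m -> rem_nth i (nseq m x) = nseq m.-1 x.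
Proof.
elim: m i => [|m IHm] [|i] //= lt_im; first by rewrite rem_nth0.
by rewrite rem_nthS IHm //; case: m {IHm} lt_im.
Qed.

End RemNth.

Lemma map_rem_nth T U (f : T -> U) i s : map f (rem_nth i s) = rem_nth i (map f s).
Proof. by rewrite /rem_nth map_cat map_take map_drop. Qed.

Lemma rem_nth_uniq (T : eqType) (x0 : T) i s : uniq s -> i < size s ->
  rem_nth i s = filter (predC1 (nth x0 s i)) s.
Proof.
move=> Us lt_i_s; have Es := cat_take_drop i s.
rewrite (drop_nth x0 lt_i_s) in Es; set y := nth x0 s i in Es *.
rewrite -{2}Es filter_cat /= eqxx /=.
move: Us; rewrite -{1}Es cat_uniq /= negb_or => /and4P[_ /andP[yNl _] ylr _].
rewrite /rem_nth; congr (_ ++ _); apply/esym/all_filterP/allP => z z_s /=;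
  [apply: contraNneq yNl | apply: contraNneq ylr] => <- //.
Qed.

Lemma card_ord_ltn N (a : 'I_N) : #|[set b : 'I_N | (b < a)%N]| = a.
Proof.
rewrite -sum1dep_card -(big_ord_widen_cond N xpredT (fun=> 1%N) (ltnW (ltn_ord a))).
by rewrite sum1_card card_ord.
Qed.

Section BigNat.
Variable V : nmodType.
Local Open Scope ring_scope.

Lemma big_card1 N (F : {set 'I_N} -> V) :
  \sum_(A : {set 'I_N} | #|A| == 1%N) F A = \sum_(a < N) F [set a].
Proof.
rewrite (eq_bigl (mem [set [set a] | a : 'I_N])); last first.
  by move=> A; apply/cards1P/imsetP => [[a ->]|[a _ ->]]; exists a.
by rewrite big_imset //= => a b _ _; apply: set1_inj.
Qed.

Lemma big_bump (g : nat -> V) i m : (i <= m)%N ->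
  \sum_(0 <= k < m) g (bump i k) = \sum_(0 <= j < m.+1 | j != i) g j.
Proof.
elim: m => [|m IHm] le_im.
  by move: le_im; rewrite leqn0 => /eqP->; rewrite big_geq // big_mkcond big_nat1 eqxx.
rewrite big_nat_recr //= [RHS]big_mkcond big_nat_recr //= -big_mkcond.
case: (ltngtP i m.+1) le_im => // [lt_im _|-> _].
  by rewrite IHm // /bump -ltnS lt_im.
rewrite addr0 big_mkcond big_nat_recr //= ltn_eqF // /bump ltnn.
congr (_ + _); apply: eq_big_nat => k /andP[_ lt_km].
by rewrite ltnNge (ltnW lt_km) ltn_eqF // ltnW.
Qed.

Lemma big_nat_recl_cond (P : pred nat) (F : nat -> V) m : ~~ P 0%N ->
  \sum_(0 <= j < m.+1 | P j) F j = \sum_(0 <= j < m | P j.+1) F j.+1.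
Proof. by move=> /negbTE P0; rewrite big_ltn_cond // P0 big_add1. Qed.

Lemma sum_ord_ltn_pairs (x : V) p :
  \sum_(i < p) \sum_(j < p | (i < j)%N) x = x *+ 'C(p, 2).
Proof.
rewrite (exchange_big_dep xpredT) //= -bin2_sum big_mkord -sumrMnr.
apply: eq_bigr => j _; rewrite sumr_const -[in RHS](card_ord_ltn j).
by congr (_ *+ _); apply: eq_card => i; rewrite !inE.
Qed.

End BigNat.

Section AltPairSum.
Variable R : comNzRingType.
Local Open Scope ring_scope.

Definition pair_sign (i j : nat) : R := (-1) ^+ (i + j) * (if (i < j)%N then -1 else 1).

Lemma pair_sign_bump i k : (-1) ^+ (i + k) = pair_sign i (bump i k).
Proof.
rewrite /pair_sign /bump; case: (leqP i k) => [le_ik|lt_ki] /=.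
  by rewrite ltnS le_ik addnS exprS mulrN1 mulN1r opprK.
by rewrite ltnNge (ltnW lt_ki) mulr1.
Qed.

Lemma pair_signC i j : i != j -> pair_sign j i = - pair_sign i j.
Proof.
rewrite /pair_sign addnC; case: ltngtP => [_ _|_ _|]; last by [].
  by rewrite mulr1 mulrN1.
by rewrite mulr1 mulrN1 opprK.
Qed.

Section Pairs.
Variables (T : Type) (x0 : T) (s : seq T).

Definition rem_nth2 i j :=
  if (i < j)%N then rem_nth i (rem_nth j s) else rem_nth j (rem_nth i s).

Lemma rem_nth2_bump i k : rem_nth k (rem_nth i s) = rem_nth2 i (bump i k).
Proof.
rewrite /rem_nth2 /bump; case: (leqP i k) => [le_ik|lt_ki] /=.
  by rewrite ltnS le_ik rem_nthC.
by rewrite ltnNge (ltnW lt_ki).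
Qed.

Lemma rem_nth2C i j : rem_nth2 j i = rem_nth2 i j.
Proof. by rewrite /rem_nth2; case: ltngtP => // ->. Qed.

Definition alt_pair_sum (F : T -> T -> seq T -> R) :=
  \sum_(0 <= i < size s) \sum_(0 <= k < size (rem_nth i s))
    (-1) ^+ (i + k) * F (nth x0 s i) (nth x0 (rem_nth i s) k) (rem_nth k (rem_nth i s)).

Lemma alt_pair_sumE F : alt_pair_sum F =
  \sum_(0 <= i < size s) \sum_(0 <= j < size s)
    (if j != i then pair_sign i j * F (nth x0 s i) (nth x0 s j) (rem_nth2 i j) else 0).
Proof.
apply: eq_big_nat => i /andP[_ lt_is]; rewrite -big_mkcond /=.
have s_gt0 : (0 < size s)%N by apply: leq_ltn_trans lt_is.
rewrite size_rem_nth // -[in RHS](prednK s_gt0) -big_bump; last by rewrite -ltnS prednK.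
by apply: eq_bigr => k _; rewrite pair_sign_bump nth_rem_nth rem_nth2_bump.
Qed.

Lemma alt_pair_sum_swap F :
  alt_pair_sum (fun u v => F v u) = - alt_pair_sum F.
Proof.
rewrite !alt_pair_sumE [LHS]exchange_big -sumrN; apply: eq_bigr => i _.
rewrite -sumrN; apply: eq_bigr => j _; case: (eqVneq i j) => [->|ne_ij] /=.
  by rewrite oppr0.
by rewrite pair_signC // rem_nth2C mulNr.
Qed.

Lemma alt_pair_sumN (F : T -> T -> seq T -> R) :
  alt_pair_sum (fun u v r => - F u v r) = - alt_pair_sum F.
Proof.
rewrite /alt_pair_sum -sumrN; apply: eq_bigr => i _; rewrite -sumrN.
by apply: eq_bigr => k _; rewrite mulrN.
Qed.

End Pairs.
End AltPairSum.

Section Laplace.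
Variables (R : realFieldType) (n : nat).
Local Open Scope ring_scope.
Local Notation V := 'rV[R]_n.
Local Notation dform := (dform R n).

Definition bilin (h : 'M[R]_n) (x y : V) : R := (x *m h *m y^T) 0 0.

Definition laplace (h : 'M[R]_n) (w : dform) : dform := fun xs ys =>
  \sum_(0 <= a < size xs) \sum_(0 <= b < size ys)
    (-1) ^+ (a + b) * bilin h (nth 0 xs a) (nth 0 ys b) * w (rem_nth a xs) (rem_nth b ys).

Lemma shuffle_sign1 N (a : 'I_N) : shuffle_sign R [set a] = (-1) ^+ a.
Proof.
rewrite /shuffle_sign; congr (_ ^+ _).
have -> : [set ab : 'I_N * 'I_N | (ab.1 \in [set a]) && (ab.2 \notin [set a]) && (ab.2 < ab.1)%N]
    = [set (a, b) | b in [set b : 'I_N | (b < a)%N]].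
  apply/setP => -[x y]; rewrite inE /=; apply/idP/imsetP => [|[z]].
    by rewrite !inE => /andP[/andP[/eqP-> _] lt_ya]; exists y; rewrite ?inE.
  rewrite !inE => lt_za [-> ->]; rewrite eqxx lt_za andbT.
  by apply: contraTN lt_za => /eqP->; rewrite ltnn.
by rewrite card_imset ?card_ord_ltn // => b c [].
Qed.

Lemma subseq_at1 (xs : seq V) (a : 'I_(size xs)) : subseq_at xs [set a] = [:: nth 0 xs a].
Proof. by rewrite /subseq_at enum_set1. Qed.

Lemma subseq_atC1 (xs : seq V) (a : 'I_(size xs)) : subseq_at xs (~: [set a]) = rem_nth a xs.
Proof.
have enumC1 : enum (~: [set a]) = filter (predC1 a) (enum 'I_(size xs)).
  by rewrite {1}/enum_mem -enumT; apply: eq_filter => x; rewrite !inE.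
transitivity (rem_nth a [seq nth 0 xs i | i : 'I_(size xs)]).
  by rewrite /subseq_at enumC1 -map_rem_nth (rem_nth_uniq a) ?enum_uniq ?size_enum_ord ?nth_ord_enum.
by congr rem_nth; rewrite -[RHS](mkseq_nth 0) /mkseq -val_enum_ord -map_comp.
Qed.

Lemma dprod_bformE h (w : dform) xs ys : dprod 1 1 (bform h) w xs ys = laplace h w xs ys.
Proof.
rewrite /dprod /laplace big_card1 big_mkord; apply: eq_bigr => a _.
rewrite big_card1 big_mkord; apply: eq_bigr => b _.
by rewrite !shuffle_sign1 !subseq_at1 !subseq_atC1 -exprD.
Qed.

Lemma dprods_cons h L xs ys : dprods (h :: L) xs ys = laplace h (dprods L) xs ys.
Proof. exact: dprod_bformE. Qed.

Lemma laplace_ext h (w w' : dform) xs ys :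
  (forall a b, (a < size xs)%N -> (b < size ys)%N ->
     w (rem_nth a xs) (rem_nth b ys) = w' (rem_nth a xs) (rem_nth b ys)) ->
  laplace h w xs ys = laplace h w' xs ys.
Proof.
move=> eq_ww'; apply: eq_big_nat => a /andP[_ lt_a]; apply: eq_big_nat => b /andP[_ lt_b].
by rewrite eq_ww'.
Qed.

Lemma laplace_sum h I (r : seq I) (P : pred I) (w : I -> dform) xs ys :
  laplace h (fun xs ys => \sum_(l <- r | P l) w l xs ys) xs ys
  = \sum_(l <- r | P l) laplace h (w l) xs ys.
Proof.
rewrite /laplace [RHS]exchange_big; apply: eq_bigr => a _.
rewrite [RHS]exchange_big; apply: eq_bigr => b _; exact: mulr_sumr.
Qed.

Lemma laplaceB h (w w' : dform) xs ys :
  laplace h (fun xs ys => w xs ys - w' xs ys) xs ys = laplace h w xs ys - laplace h w' xs ys.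
Proof.
rewrite /laplace -sumrB; apply: eq_bigr => a _; rewrite -sumrB; apply: eq_bigr => b _.
exact: mulrBr.
Qed.

Lemma laplaceZ h c (w : dform) xs ys :
  laplace h (fun xs ys => c * w xs ys) xs ys = c * laplace h w xs ys.
Proof.
rewrite /laplace mulr_sumr; apply: eq_bigr => a _; rewrite mulr_sumr; apply: eq_bigr => b _.
exact: mulrCA.
Qed.

Lemma bilinDl (g h : 'M[R]_n) x y : bilin (g + h) x y = bilin g x y + bilin h x y.
Proof. by rewrite /bilin mulmxDr mulmxDl mxE. Qed.

Lemma laplaceDl g h (w : dform) xs ys :
  laplace (g + h) w xs ys = laplace g w xs ys + laplace h w xs ys.
Proof.
rewrite /laplace -big_split; apply: eq_bigr => a _; rewrite -big_split; apply: eq_bigr => b _.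
by rewrite bilinDl mulrDr mulrDl.
Qed.

Lemma laplace_laplaceE g h (w : dform) xs ys :
  laplace g (laplace h w) xs ys =
  alt_pair_sum 0 xs (fun u v rx =>
    alt_pair_sum 0 ys (fun u' v' ry => bilin g u u' * bilin h v v' * w rx ry)).
Proof.
rewrite /laplace /alt_pair_sum; apply: eq_bigr => a _.
under eq_bigr => b _ do rewrite mulr_sumr.
rewrite exchange_big; apply: eq_bigr => c _; rewrite mulr_sumr; apply: eq_bigr => b _.
rewrite !mulr_sumr; apply: eq_bigr => d _; rewrite !exprD; ring.
Qed.

Lemma laplaceC g h (w : dform) xs ys :
  laplace g (laplace h w) xs ys = laplace h (laplace g w) xs ys.
Proof.
rewrite !laplace_laplaceE -[RHS]opprK -alt_pair_sum_swap -alt_pair_sumN.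
apply: eq_bigr => i _; apply: eq_bigr => k _; congr (_ * _).
rewrite -alt_pair_sum_swap.
by apply: eq_bigr => b _; apply: eq_bigr => d _; rewrite [bilin g _ _ * _]mulrC.
Qed.

Lemma dprods_consC g h (L : seq 'M[R]_n) xs ys :
  dprods [:: g, h & L] xs ys = dprods [:: h, g & L] xs ys.
Proof.
rewrite !dprods_cons; transitivity (laplace g (laplace h (dprods L)) xs ys).
  by apply: laplace_ext => a b _ _; rewrite dprods_cons.
by rewrite laplaceC; apply: laplace_ext => a b _ _; rewrite dprods_cons.
Qed.

End Laplace.

Section Contraction.
Variables (R : realFieldType) (n : nat).
Local Open Scope ring_scope.
Local Notation V := 'rV[R]_n.
Local Notation dform := (dform R n).
Local Notation e := (@ebasis R n).

Lemma bilin_mulmx (g h : 'M[R]_n) x y :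
  \sum_(j < n) bilin g x (e j) * bilin h (e j) y = bilin (g *m h) x y.
Proof.
rewrite /bilin.
have -> : x *m (g *m h) *m y^T = (x *m g) *m (h *m y^T) by rewrite !mulmxA.
rewrite [RHS]mxE; apply: eq_bigr => j _.
by rewrite /ebasis trmx_delta -colE -rowE -row_mul !mxE.
Qed.

Lemma mxtrace_bilin (h : 'M[R]_n) : \tr h = \sum_(j < n) bilin h (e j) (e j).
Proof.
apply: eq_bigr => j _.
by rewrite /bilin /ebasis trmx_delta -colE -rowE !mxE.
Qed.

Lemma bilin_trmx (h : 'M[R]_n) (x y : V) : bilin h x y = bilin h^T y x.
Proof.
rewrite /bilin; transitivity ((x *m h *m y^T)^T 0 0); first by rewrite [RHS]mxE.
by rewrite !trmx_mul trmxK mulmxA.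
Qed.

Lemma laplace_trmx h (w : dform) xs ys :
  laplace h w xs ys = laplace h^T (fun ys xs => w xs ys) ys xs.
Proof.
rewrite /laplace exchange_big; apply: eq_bigr => b _; apply: eq_bigr => a _.
by rewrite bilin_trmx addnC.
Qed.

Lemma dprods_trmx (L : seq 'M[R]_n) xs ys : dprods L xs ys = dprods (map trmx L) ys xs.
Proof.
elim: L xs ys => [|h L IHL] xs ys //=.
rewrite !dprod_bformE laplace_trmx; apply: laplace_ext => b a _ _; exact: IHL.
Qed.

Lemma laplace_cons_x h (w : dform) u s ys :
  laplace h w (u :: s) ys =
  \sum_(0 <= b < size ys) (-1) ^+ b * bilin h u (nth 0 ys b) * w s (rem_nth b ys)
  - \sum_(0 <= a < size s) \sum_(0 <= b < size ys)
      (-1) ^+ (a + b) * bilin h (nth 0 s a) (nth 0 ys b) * w (u :: rem_nth a s) (rem_nth b ys).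
Proof.
rewrite /laplace big_nat_recl // rem_nth0 /=; congr (_ + _).
rewrite -sumrN; apply: eq_bigr => a _; rewrite -sumrN; apply: eq_bigr => b _.
by rewrite rem_nthS addSn exprS; ring.
Qed.

Lemma laplace_cons_y h (w : dform) xs u s :
  laplace h w xs (u :: s) =
  \sum_(0 <= a < size xs) (-1) ^+ a * bilin h (nth 0 xs a) u * w (rem_nth a xs) s
  - \sum_(0 <= a < size xs) \sum_(0 <= b < size s)
      (-1) ^+ (a + b) * bilin h (nth 0 xs a) (nth 0 s b) * w (rem_nth a xs) (u :: rem_nth b s).
Proof.
rewrite /laplace -sumrB; apply: eq_bigr => a _.
rewrite /= big_nat_recl // addn0 rem_nth0 /=; congr (_ + _).
by rewrite -sumrN; apply: eq_bigr => b _; rewrite rem_nthS addnS exprS; ring.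
Qed.

Lemma laplace_cons_xy h (w : dform) u xs ys :
  laplace h w (u :: xs) (u :: ys) =
  bilin h u u * w xs ys
  - \sum_(0 <= b < size ys) (-1) ^+ b * bilin h u (nth 0 ys b) * w xs (u :: rem_nth b ys)
  - \sum_(0 <= a < size xs) (-1) ^+ a * bilin h (nth 0 xs a) u * w (u :: rem_nth a xs) ys
  + \sum_(0 <= a < size xs) \sum_(0 <= b < size ys)
      (-1) ^+ (a + b) * bilin h (nth 0 xs a) (nth 0 ys b) * w (u :: rem_nth a xs) (u :: rem_nth b ys).
Proof.
rewrite laplace_cons_x /= big_nat_recl // rem_nth0 expr0 mul1r.
under eq_bigr => b _ do rewrite /= rem_nthS exprS mulN1r !mulNr.
under [X in _ - X]eq_bigr => a _ do
  (rewrite big_nat_recl //= addn0 rem_nth0;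
   under eq_bigr => b _ do rewrite rem_nthS addnS exprS mulN1r !mulNr;
   rewrite sumrN).
by rewrite sumrN big_split /= sumrN; ring.
Qed.

Definition contr (w : dform) : dform := fun xs ys => \sum_(j < n) w (e j :: xs) (e j :: ys).

Definition contr_x (h : 'M[R]_n) (w : dform) : dform := fun xs ys =>
  \sum_(0 <= a < size xs) (-1) ^+ a *
    \sum_(j < n) bilin h (nth 0 xs a) (e j) * w (e j :: rem_nth a xs) ys.

Definition contr_y (h : 'M[R]_n) (w : dform) : dform := fun xs ys =>
  \sum_(0 <= b < size ys) (-1) ^+ b *
    \sum_(j < n) bilin h (e j) (nth 0 ys b) * w xs (e j :: rem_nth b ys).

Lemma contr_laplace h (w : dform) xs ys :
  contr (laplace h w) xs ys =
  \tr h * w xs ys - contr_y h w xs ys - contr_x h w xs ys + laplace h (contr w) xs ys.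
Proof.
rewrite /contr; under eq_bigr => j _ do rewrite laplace_cons_xy.
rewrite big_split /= !sumrB; congr (_ - _ - _ + _).
- by rewrite -mulr_suml -mxtrace_bilin.
- rewrite exchange_big; apply: eq_bigr => b _; rewrite mulr_sumr.
  by apply: eq_bigr => j _; rewrite !mulrA.
- rewrite exchange_big; apply: eq_bigr => a _; rewrite mulr_sumr.
  by apply: eq_bigr => j _; rewrite !mulrA.
- rewrite exchange_big; apply: eq_bigr => a _; rewrite exchange_big; apply: eq_bigr => b _.
  by rewrite mulr_sumr.
Qed.

Lemma contr_y_laplace g h (w : dform) xs ys :
  contr_y h (laplace g w) xs ys = laplace (g *m h) w xs ys + laplace g (contr_y h w) xs ys.
Proof.
pose F a u v r := \sum_(j < n)
  bilin h (e j) u * bilin g (nth 0 xs a) v * w (rem_nth a xs) (e j :: r).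
have cross : laplace g (contr_y h w) xs ys
    = \sum_(0 <= a < size xs) (-1) ^+ a * alt_pair_sum 0 ys (fun u v => F a v u).
  apply: eq_bigr => a _; rewrite mulr_sumr; apply: eq_bigr => b _.
  rewrite !mulr_sumr; apply: eq_bigr => c _; rewrite !mulr_sumr; apply: eq_bigr => j _.
  by rewrite !exprD; ring.
have direct : contr_y h (laplace g w) xs ys = laplace (g *m h) w xs ys
    - \sum_(0 <= a < size xs) (-1) ^+ a * alt_pair_sum 0 ys (F a).
  rewrite /contr_y.
  under eq_bigr => b _ do under eq_bigr => j _ do rewrite laplace_cons_y mulrBr.
  under eq_bigr => b _ do rewrite sumrB mulrBr.
  rewrite sumrB; congr (_ - _).
    rewrite /laplace [RHS]exchange_big; apply: eq_bigr => b _.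
    under [RHS]eq_bigr => a _ do rewrite -bilin_mulmx mulr_sumr mulr_suml.
    rewrite big_distrr /=; under eq_bigr => j _ do rewrite !big_distrr /=.
    rewrite exchange_big; apply: eq_bigr => a _; apply: eq_bigr => j _.
    by rewrite exprD; ring.
  rewrite /alt_pair_sum; under [RHS]eq_bigr => a _ do rewrite big_distrr /=.
  rewrite [RHS]exchange_big; apply: eq_bigr => b _.
  rewrite big_distrr /=; under eq_bigr => j _ do rewrite !big_distrr /=.
  rewrite exchange_big; apply: eq_bigr => a _.
  under eq_bigr => j _ do rewrite !big_distrr /=.
  rewrite exchange_big big_distrr /=; apply: eq_bigr => c _.
  rewrite /F !big_distrr /=; apply: eq_bigr => j _.
  by rewrite !exprD; ring.
rewrite direct cross; under [in RHS]eq_bigr => a _ do rewrite alt_pair_sum_swap mulrN.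
by rewrite sumrN.
Qed.

Lemma contr_y_dprods h (L : seq 'M[R]_n) xs ys : size ys = size L ->
  contr_y h (dprods L) xs ys
  = \sum_(0 <= l < size L) dprods (bcomp h (nth 0 L l) :: rem_nth l L) xs ys.
Proof.
elim: L xs ys => [|g L IHL] xs ys size_ys; first by rewrite /contr_y size_ys !big_geq.
transitivity (contr_y h (laplace g (dprods L)) xs ys).
  by apply: eq_bigr => b _; congr (_ * _); apply: eq_bigr => j _; rewrite dprods_cons.
rewrite contr_y_laplace -dprods_cons /= big_nat_recl // rem_nth0; congr (_ + _).
transitivity (laplace g (fun xs ys => \sum_(0 <= l < size L)
    dprods (bcomp h (nth 0 L l) :: rem_nth l L) xs ys) xs ys).
  by apply: laplace_ext => a b _ lt_b; rewrite IHL // size_rem_nth // size_ys.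
rewrite laplace_sum; apply: eq_bigr => l _.
by rewrite -dprods_cons dprods_consC.
Qed.

Lemma contr_x_trmx h (w : dform) xs ys :
  contr_x h w xs ys = contr_y h^T (fun ys xs => w xs ys) ys xs.
Proof.
by apply: eq_bigr => a _; congr (_ * _); apply: eq_bigr => j _; rewrite bilin_trmx.
Qed.

Lemma contr_x_dprods h (L : seq 'M[R]_n) xs ys : size xs = size L ->
  contr_x h (dprods L) xs ys
  = \sum_(0 <= l < size L) dprods (bcomp (nth 0 L l) h :: rem_nth l L) xs ys.
Proof.
move=> size_xs; transitivity (contr_y h^T (dprods (map trmx L)) ys xs).
  rewrite contr_x_trmx; apply: eq_bigr => a _; congr (_ * _).
  by apply: eq_bigr => j _; rewrite dprods_trmx.
rewrite contr_y_dprods ?size_map //; apply: eq_big_nat => l /andP[_ lt_l].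
by rewrite [RHS]dprods_trmx /= map_rem_nth (nth_map 0) // /bcomp trmx_mul.
Qed.

End Contraction.

Section Expansion.
Variables (R : realFieldType) (n : nat).
Local Open Scope ring_scope.
Local Notation dform := (dform R n).

Lemma dprods_consD g h (L : seq 'M[R]_n) xs ys :
  dprods (g + h :: L) xs ys = dprods (g :: L) xs ys + dprods (h :: L) xs ys.
Proof. by rewrite !dprods_cons laplaceDl. Qed.

Definition contr_expansion (L : seq 'M[R]_n) : dform := fun xs ys =>
  \sum_(0 <= i < size L) \tr (nth 0 L i) * dprods (rem_nth i L) xs ys
  - \sum_(0 <= i < size L) \sum_(0 <= j < size L | (i < j)%N)
      dprods (bcomp (nth 0 L j) (nth 0 L i) + bcomp (nth 0 L i) (nth 0 L j)
              :: rem_nth i (rem_nth j L)) xs ys.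

Lemma laplace_contr_expansion h L xs ys :
  laplace h (contr_expansion L) xs ys =
  \sum_(0 <= i < size L) \tr (nth 0 L i) * dprods (h :: rem_nth i L) xs ys
  - \sum_(0 <= i < size L) \sum_(0 <= j < size L | (i < j)%N)
      dprods (h :: bcomp (nth 0 L j) (nth 0 L i) + bcomp (nth 0 L i) (nth 0 L j)
              :: rem_nth i (rem_nth j L)) xs ys.
Proof.
rewrite laplaceB !laplace_sum; congr (_ - _); apply: eq_bigr => i _.
  by rewrite laplaceZ dprods_cons.
by rewrite laplace_sum; apply: eq_bigr => j _; rewrite dprods_cons.
Qed.

Lemma contr_expansion_cons h L xs ys :
  contr_expansion (h :: L) xs ys =
  \tr h * dprods L xs ys
  - \sum_(0 <= l < size L) dprods (bcomp h (nth 0 L l) :: rem_nth l L) xs ys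
  - \sum_(0 <= l < size L) dprods (bcomp (nth 0 L l) h :: rem_nth l L) xs ys
  + laplace h (contr_expansion L) xs ys.
Proof.
have size_cons : size (h :: L) = (size L).+1 by [].
have pairs0 : \sum_(0 <= j < size (h :: L) | (0 < j)%N)
    dprods (bcomp (nth 0 (h :: L) j) h + bcomp h (nth 0 (h :: L) j)
            :: rem_nth 0 (rem_nth j (h :: L))) xs ys
  = \sum_(0 <= l < size L) dprods (bcomp (nth 0 L l) h :: rem_nth l L) xs ys
  + \sum_(0 <= l < size L) dprods (bcomp h (nth 0 L l) :: rem_nth l L) xs ys.
  rewrite size_cons big_nat_recl_cond // -big_split.
  by apply: eq_big => [l|l _] //; rewrite dprods_consD rem_nthS rem_nth0.
have pairsS i : \sum_(0 <= j < size (h :: L) | (i.+1 < j)%N)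
    dprods (bcomp (nth 0 (h :: L) j) (nth 0 L i) + bcomp (nth 0 L i) (nth 0 (h :: L) j)
            :: rem_nth i.+1 (rem_nth j (h :: L))) xs ys
  = \sum_(0 <= j < size L | (i < j)%N)
      dprods (h :: bcomp (nth 0 L j) (nth 0 L i) + bcomp (nth 0 L i) (nth 0 L j)
              :: rem_nth i (rem_nth j L)) xs ys.
  rewrite size_cons big_nat_recl_cond //.
  by apply: eq_big => [j|j _]; rewrite ?ltnS // -dprods_consC.
rewrite laplace_contr_expansion /contr_expansion size_cons !big_nat_recl // pairs0.
under [X in _ - (_ + X)]eq_bigr => i _ do rewrite pairsS.
rewrite rem_nth0; ring.
Qed.

(* [L] must be nonempty: [dunit] is 1 on all arguments, so [contr dunit] is n. *)
Lemma contr_dprods (L : seq 'M[R]_n) xs ys : (0 < size L)%N ->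
  size xs = (size L).-1 -> size ys = (size L).-1 ->
  contr (dprods L) xs ys = contr_expansion L xs ys.
Proof.
elim: L xs ys => [|h L IHL] xs ys // _ size_xs size_ys.
rewrite /= in size_xs size_ys.
transitivity (contr (laplace h (dprods L)) xs ys).
  by apply: eq_bigr => j _; rewrite dprods_cons.
rewrite contr_laplace contr_y_dprods // contr_x_dprods // contr_expansion_cons.
congr (_ + _); apply: laplace_ext => a b.
rewrite size_xs size_ys => lt_a lt_b; have L_gt0 : (0 < size L)%N by apply: leq_ltn_trans lt_a.
by rewrite IHL // size_rem_nth ?size_xs ?size_ys.
Qed.

End Expansion.

Section Enum.
Variables (T : Type) (p : nat) (f : 'I_p -> T).

Lemma nth_map_enum x0 (i : 'I_p) : nth x0 [seq f l | l <- enum 'I_p] i = f i.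
Proof. by rewrite (nth_map i) ?size_enum_ord // nth_ord_enum. Qed.

Lemma rem_nth_enum (i : 'I_p) : rem_nth i (enum 'I_p) = [seq l <- enum 'I_p | l != i].
Proof. by rewrite (rem_nth_uniq i) ?enum_uniq ?size_enum_ord // nth_ord_enum. Qed.

Lemma rem_nth2_enum (i j : 'I_p) : (i < j)%N ->
  rem_nth i (rem_nth j (enum 'I_p)) = [seq l <- enum 'I_p | (l != i) && (l != j)].
Proof.
move=> lt_ij; have uniq_j : uniq (rem_nth j (enum 'I_p)).
  by rewrite rem_nth_enum filter_uniq ?enum_uniq.
have lt_i : (i < size (rem_nth j (enum 'I_p)))%N.
  by rewrite size_rem_nth size_enum_ord //; have := ltn_ord j; lia.
rewrite (rem_nth_uniq i uniq_j lt_i) nth_rem_nth /bump leqNgt lt_ij nth_ord_enum.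
by rewrite rem_nth_enum -filter_predI; apply: eq_filter.
Qed.

Lemma rem_nth_map_enum (i : 'I_p) :
  rem_nth i [seq f l | l <- enum 'I_p] = [seq f l | l <- enum 'I_p & l != i].
Proof. by rewrite -map_rem_nth rem_nth_enum. Qed.

Lemma rem_nth2_map_enum (i j : 'I_p) : (i < j)%N ->
  rem_nth i (rem_nth j [seq f l | l <- enum 'I_p])
  = [seq f l | l <- enum 'I_p & (l != i) && (l != j)].
Proof. by move=> lt_ij; rewrite -rem_nth2_enum // !map_rem_nth. Qed.

End Enum.

Section EnumExpansion.
Variables (R : realFieldType) (n : nat).
Local Open Scope ring_scope.

Lemma contr_expansion_enum p (h : 'I_p -> 'M[R]_n) xs ys :
  contr_expansion [seq h i | i <- enum 'I_p] xs ys =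
  \sum_(i < p) \tr (h i) * dprods [seq h l | l <- enum 'I_p & l != i] xs ys
  - \sum_(i < p) \sum_(j < p | (i < j)%N)
      dprods (bcomp (h j) (h i) + bcomp (h i) (h j)
              :: [seq h l | l <- enum 'I_p & (l != i) && (l != j)]) xs ys.
Proof.
rewrite /contr_expansion size_map size_enum_ord !big_mkord; congr (_ - _).
  by apply: eq_bigr => i _; rewrite nth_map_enum rem_nth_map_enum.
apply: eq_bigr => i _; rewrite big_mkord; apply: eq_bigr => j lt_ij.
by rewrite !nth_map_enum rem_nth2_map_enum.
Qed.

End EnumExpansion.

Local Open Scope ring_scope.

Lemma contr_dprods_enum (R : realFieldType) (n p : nat) (h : 'I_p -> 'M[R]_n) :
  deq p.-1 p.-1
    (dcontr p p (dprods [seq h i | i <- enum 'I_p]))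
    (fun xs ys =>
       \sum_(i < p) \tr (h i) * dprods [seq h l | l <- enum 'I_p & l != i] xs ys
       - \sum_(i < p) \sum_(j < p | (i < j)%N)
           dprods (bcomp (h j) (h i) + bcomp (h i) (h j)
                   :: [seq h l | l <- enum 'I_p & (l != i) && (l != j)]) xs ys).
Proof.
move=> xs ys size_xs size_ys; rewrite /dcontr andbb -contr_expansion_enum.
case: (posnP p) => [p0|p_gt0].
  by subst p; rewrite /contr_expansion size_map size_enum_ord !big_geq // subr0.
by apply: contr_dprods; rewrite size_map size_enum_ord.
Qed.

Lemma contr_dpow (R : realFieldType) (n p : nat) (k : 'M[R]_n) :
  deq p.-1 p.-1
    (dcontr p p (dpow k p))
    (fun xs ys =>
       p%:R * \tr k * dpow k p.-1 xs ys
       - (p * p.-1)%:R * dprods (bcomp k k :: nseq p.-2 k) xs ys).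
Proof.
move=> xs ys size_xs size_ys.
have enum_cst : [seq k | _ <- enum 'I_p] = nseq p k.
  rewrite -[p in nseq p k](size_enum_ord p) -(size_map (fun=> k)).
  by apply/all_pred1P/allP => _ /mapP[? _ ->] /=.
rewrite /dpow -enum_cst (contr_dprods_enum (fun=> k)) //; congr (_ - _).
  under eq_bigr => i _ do rewrite -rem_nth_map_enum enum_cst rem_nth_nseq //.
  by rewrite sumr_const card_ord -mulrA mulr_natl.
transitivity (\sum_(i < p) \sum_(j < p | (i < j)%N)
  (dprods (bcomp k k :: nseq p.-2 k) xs ys + dprods (bcomp k k :: nseq p.-2 k) xs ys)).
  apply: eq_bigr => i _; apply: eq_bigr => j lt_ij.
  have lt_ip : (i < p.-1)%N by have := ltn_ord j; lia.
  by rewrite -rem_nth2_map_enum // enum_cst !rem_nth_nseq // dprods_consD.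
by rewrite sum_ord_ltn_pairs -mulr2n -mulrnA -(mul_bin_diag p 1) bin1 mulr_natl.
Qed.

Theorem mainTheorem13 (R : realFieldType) (n p : nat) :
  (forall h : 'I_p -> 'M[R]_n,
    deq p.-1 p.-1
      (dcontr p p (dprods [seq h i | i <- enum 'I_p]))
      (fun xs ys =>
         \sum_(i < p) \tr (h i) * dprods [seq h l | l <- enum 'I_p & l != i] xs ys
         - \sum_(i < p) \sum_(j < p | (i < j)%N)
             dprods (bcomp (h j) (h i) + bcomp (h i) (h j)
                     :: [seq h l | l <- enum 'I_p & (l != i) && (l != j)]) xs ys))
  /\
  (forall k : 'M[R]_n,
    deq p.-1 p.-1
      (dcontr p p (dpow k p))
      (fun xs ys =>
         p%:R * \tr k * dpow k p.-1 xs ys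
         - (p * p.-1)%:R * dprods (bcomp k k :: nseq p.-2 k) xs ys)).
Proof. by split; [exact: contr_dprods_enum | exact: contr_dpow]. Qed.
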